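(* Let $(X,\|\cdot\|)$ be a normed linear space and let $I$ be a non-trivial admissible ideal in $\mathbb{N}$. A sequence $x=\{x_k\}_{k\in\mathbb{N}}$ in $X$ is $I$-statistically bounded if and only if there exists a real number $r>0$ such that $I\text{-}st\text{-}\mathrm{LIM}_x^r\ne\emptyset$.
   Context: An ideal $I$ in $\mathbb{N}$ is a family of subsets of $\mathbb{N}$ containing $\emptyset$, closed under finite unions and under taking subsets; it is non-trivial if $\mathbb{N}\notin I$ and admissible if $\{n\}\in I$ for every $n$. A sequence $x$ in $X$ is $I$-statistically bounded if there exists $G>0$ such that for every $\delta>0$, $\{n\in\mathbb{N}:\frac1n|\{k\le n:\|x_k\|\ge G\}|\ge\delta\}\in I$. For $r\ge0$, $x$ is $r$-$I$-statistically convergent to $\xi$ if for every $\varepsilon>0$ and $\delta>0$, $\{n\in\mathbb{N}:\frac1n|\{k\le n:\|x_k-\xi\|\ge r+\varepsilon\}|\ge\delta\}\in I$; $I\text{-}st\text{-}\mathrm{LIM}_x^r$ is the set of all such $\xi$. *)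

From HB Require Import structures.
From mathcomp Require Import all_boot all_order all_algebra.
From mathcomp Require Import all_classical all_reals.
From mathcomp Require Import topology normedtype.
Set Implicit Arguments. Unset Strict Implicit. Unset Printing Implicit Defensive.
Import Order.TTheory GRing.Theory Num.Theory.
Import numFieldNormedType.Exports.
Local Open Scope classical_set_scope.
Local Open Scope ring_scope.

(* Convention: the paper's N = {1,2,...} is represented by nat via n <-> n.+1.
   So the natural number n : nat stands for the paper's index n+1, and the
   sequence x : nat -> X has x k standing for the paper's x_{k+1}. *)

Definition is_ideal (I : set (set nat)) : Prop :=
  [/\ I set0,
      (forall A B, I A -> I B -> I (A `|` B)) &
      (forall A B, B `<=` A -> I A -> I B)].

Definition nontrivial_ideal (I : set (set nat)) : Prop := ~ I setT.

Definition admissible_ideal (I : set (set nat)) : Prop :=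
  forall n : nat, I [set n].

Definition density_set {R : realType} (P : nat -> bool) (delta : R) : set nat :=
  [set n : nat | delta <= (#|[set k : 'I_n.+1 | P (nat_of_ord k)]|%:R / n.+1%:R)].

Definition I_stat_bounded {R : realType} {X : normedModType R}
  (I : set (set nat)) (x : nat -> X) : Prop :=
  exists G : R, 0 < G /\
    forall delta : R, 0 < delta ->
      I (density_set (fun k => G <= `|x k|) delta).

Definition r_I_stat_conv {R : realType} {X : normedModType R}
  (I : set (set nat)) (r : R) (x : nat -> X) (xi : X) : Prop :=
  forall eps delta : R, 0 < eps -> 0 < delta ->
    I (density_set (fun k => r + eps <= `|x k - xi|) delta).

Definition I_st_LIM {R : realType} {X : normedModType R}
  (I : set (set nat)) (r : R) (x : nat -> X) : set X :=
  [set xi | r_I_stat_conv I r x xi].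

From HB Require Import structures.
From mathcomp Require Import all_boot all_order all_algebra.
From mathcomp Require Import all_classical all_reals.
From mathcomp Require Import topology normedtype.
Import Order.TTheory GRing.Theory Num.Theory.
Import numFieldNormedType.Exports.
Local Open Scope classical_set_scope.
Local Open Scope ring_scope.

(* If the terms with norm at least G have I-density zero, then 0 is a
   G-I-statistical limit, because ||x_k - 0|| >= G + eps forces ||x_k|| >= G.
   Conversely, if xi is an r-I-statistical limit, then ||x_k|| >= |r| + 1 + ||xi||
   forces ||x_k - xi|| >= r + 1, so the sequence is I-statistically bounded by
   |r| + 1 + ||xi||. *)

Lemma density_set_sub (R : realType) (P Q : nat -> bool) (delta : R) :
  (forall k, P k -> Q k) -> density_set P delta `<=` density_set Q delta.
Proof.
move=> PQ n /= le_delta; apply: (le_trans le_delta).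
apply: ler_wpM2r; first by rewrite invr_ge0 ler0n.
rewrite ler_nat; apply: subset_leq_card; apply/fintype.subsetP => k.
by rewrite !in_setE; apply: PQ.
Qed.

Section IStatisticalBoundedness.
Variables (R : realType) (X : normedModType R) (I : set (set nat)).
Hypothesis I_sub : forall A B, B `<=` A -> I A -> I B.

Lemma I_stat_bounded_conv0 (x : nat -> X) (G : R) :
  (forall delta : R, 0 < delta -> I (density_set (fun k => G <= `|x k|) delta)) ->
  r_I_stat_conv I G x 0.
Proof.
move=> xG eps delta eps_gt0 delta_gt0; apply: I_sub (xG _ delta_gt0).
apply: density_set_sub => k; rewrite subr0; apply: le_trans.
by rewrite lerDl ltW.
Qed.

Lemma r_I_stat_conv_bounded (r : R) (x : nat -> X) (xi : X) :
  r_I_stat_conv I r x xi -> I_stat_bounded I x.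
Proof.
move=> x_xi; exists (`|r| + 1 + `|xi|); split.
  by rewrite -addrA ltr_pwDr ?ltr_wpDr.
move=> delta delta_gt0; apply: I_sub (x_xi 1 delta ltr01 delta_gt0).
apply: density_set_sub => k /= big_xk.
apply: le_trans (lerB_dist (x k) xi); rewrite lerBrDr.
by apply: le_trans big_xk; rewrite lerD2r lerD2r ler_norm.
Qed.

End IStatisticalBoundedness.

Theorem theorem3p7 (R : realType) (X : normedModType R) (I : set (set nat))
  (hI : is_ideal I) (hnt : nontrivial_ideal I) (hadm : admissible_ideal I)
  (x : nat -> X) :
  I_stat_bounded I x <-> exists r : R, 0 < r /\ I_st_LIM I r x !=set0.
Proof.
have [_ _ I_sub] := hI; split.
- move=> [G [G_gt0 xG]]; exists G; split => //.
  by exists 0; apply: I_stat_bounded_conv0.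
- by move=> [r [_ [xi x_xi]]]; apply: r_I_stat_conv_bounded x_xi.
Qed.
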